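(* Let $F:\mathbb{C}^n\to\mathbb{C}^n$ be a polynomial map of the form $F=\mathrm{Id}+H$, i.e. $F_i=X_i+H_i(X_1,\dots,X_n)$, where each $H_i$ is a polynomial of lower degree $d_i\ge2$, $1\le i\le n$. For each $i$, let $(P_k^i)_{k\ge0}$ be defined by $P_0^i=X_i$ and $P_k^i(X)=P_{k-1}^i(F_1,\dots,F_n)-P_{k-1}^i(X_1,\dots,X_n)$ for $k\ge1$. Then the following are equivalent: (a) $F$ is a quasi-translation; (b) $JH\cdot H=0$, where $JH=(\partial H_i/\partial X_j)_{i,j}$ is the Jacobian matrix of $H$ and $H$ is viewed as a column vector; (c) $P_2^i=0$ for all $1\le i\le n$.
   Context: A polynomial map $F=\mathrm{Id}+H:\mathbb{C}^n\to\mathbb{C}^n$ is a quasi-translation if it is invertible with polynomial inverse $F^{-1}=\mathrm{Id}-H$. The lower degree of a nonzero polynomial is the smallest degree of its nonzero homogeneous components. *)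

From HB Require Import structures.
From mathcomp Require Import all_boot all_algebra.
From mathcomp Require Import complex.
From mathcomp Require Import Rstruct.
From mathcomp Require Import mpoly.
From Stdlib Require Import Reals.

Set Implicit Arguments. Unset Strict Implicit. Unset Printing Implicit Defensive.
Import GRing.Theory.
Local Open Scope ring_scope.

Definition CC : numClosedFieldType := (R : rcfType)[i].

(* Lower degree of a polynomial: smallest total degree of a monomial occurring
   in p, i.e. smallest degree of a nonzero homogeneous component
   (only meaningful for p != 0; set to 0 for p = 0). *)
Definition lowdeg (n : nat) (p : {mpoly CC[n]}) : nat :=
  match msupp p with
  | [::] => 0%N
  | m :: s => foldr (fun m' d => minn (mdeg m') d) (mdeg m) s
  end.

Definition idplus (n : nat) (H : 'I_n -> {mpoly CC[n]}) : n.-tuple {mpoly CC[n]} :=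
  [tuple 'X_i + H i | i < n].

Definition idminus (n : nat) (H : 'I_n -> {mpoly CC[n]}) : n.-tuple {mpoly CC[n]} :=
  [tuple 'X_i - H i | i < n].

Definition pmap_comp (n : nat) (G F : n.-tuple {mpoly CC[n]}) : n.-tuple {mpoly CC[n]} :=
  [tuple comp_mpoly F (tnth G i) | i < n].

Definition pmap_id (n : nat) : n.-tuple {mpoly CC[n]} := [tuple 'X_i | i < n].

Definition quasi_translation (n : nat) (H : 'I_n -> {mpoly CC[n]}) : Prop :=
  pmap_comp (idplus H) (idminus H) = pmap_id n /\
  pmap_comp (idminus H) (idplus H) = pmap_id n.

Definition JH_H (n : nat) (H : 'I_n -> {mpoly CC[n]}) (i : 'I_n) : {mpoly CC[n]} :=
  \sum_(j < n) mderiv j (H i) * H j.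

Fixpoint Pk (n : nat) (H : 'I_n -> {mpoly CC[n]}) (i : 'I_n) (k : nat) : {mpoly CC[n]} :=
  match k with
  | 0%N => 'X_i
  | k'.+1 => comp_mpoly (idplus H) (Pk H i k') - Pk H i k'
  end.

From HB Require Import structures.
From mathcomp Require Import all_boot all_algebra.
From mathcomp Require Import complex.
From mathcomp Require Import Rstruct.
From mathcomp Require Import mpoly.
From Stdlib Require Import Reals.

(* Write F_t = Id + t H and view H(F_t) as a polynomial in t with coefficients
   in C[X]. By the chain rule d/dt H(F_t) = JH(F_t) . H, so if JH . H = 0 then
   E = H(F_t) - H solves the linear system E' = - JH(F_t) . E with E(0) = 0,
   hence E = 0 and H(F_t) = H for every t. For t = 1 and t = -1 this says that
   F_1 and F_(-1) are mutually inverse, and P_2 = H(F_1) - H = 0. Conversely,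
   if H(F_1) = H then F_m is the m-th iterate of F_1 and H(F_m) = H for every
   natural m, so H(F_t) - H has infinitely many roots and vanishes; its
   derivative at t = 0 is JH . H. *)

Set Implicit Arguments. Unset Strict Implicit. Unset Printing Implicit Defensive.
Import GRing.Theory Num.Theory.
Local Open Scope ring_scope.

Section MPolyRing.
Variables (n : nat) (R : nzRingType).

Lemma mpoly_ring_ind (P : {mpoly R[n]} -> Prop) :
  (forall c, P c%:MP) -> (forall i, P 'X_i) ->
  (forall p q, P p -> P q -> P (p + q)) -> (forall p q, P p -> P q -> P (p * q)) ->
  forall p, P p.
Proof.
move=> PC PX PD PM; have P1 : P 1 by rewrite -mpolyC1.
elim/mpolyind => [|c m p _ _ Pp]; first by rewrite -mpolyC0.
apply: (PD) => //; rewrite -mul_mpolyC mpolyXE_id; apply: (PM) => //.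
apply: (big_ind P) => // i _; elim: (m i) => [|k IHk]; first by rewrite expr0.
by rewrite exprS; apply: (PM).
Qed.

Lemma mpoly_rmorph_eq (S : nzRingType) (f g : {rmorphism {mpoly R[n]} -> S}) :
  (forall c, f c%:MP = g c%:MP) -> (forall i, f 'X_i = g 'X_i) -> f =1 g.
Proof.
move=> fgC fgX; elim/mpoly_ring_ind => // p q fgp fgq.
  by rewrite !rmorphD fgp fgq.
by rewrite !rmorphM fgp fgq.
Qed.

Lemma mderivXU (i j : 'I_n) : ('X_i : {mpoly R[n]})^`M(j) = (i == j)%:R.
Proof.
rewrite mderivX mnm1E; case: eqP => [->|_]; last by rewrite scale0r.
have -> : (U_(j) - U_(j))%MM = 0%MM :> 'X_{1..n}.
  by apply/mnmP => k; rewrite mnmBE subnn mnm0E.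
by rewrite mpolyX0 scale1r.
Qed.

End MPolyRing.

Lemma comp_mpolyA (R : comNzRingType) (n k l : nat) (p : {mpoly R[n]})
    (lq : n.-tuple {mpoly R[k]}) (lr : k.-tuple {mpoly R[l]}) :
  (p \mPo lq) \mPo lr = p \mPo [tuple tnth lq i \mPo lr | i < n].
Proof.
apply: (mpoly_rmorph_eq (f := comp_mpoly lr \o comp_mpoly lq)) => [c|i] /=.
  by rewrite !comp_mpolyC.
by rewrite !comp_mpolyXU -!tnth_nth tnth_mktuple.
Qed.

Section CurveChainRule.
Variables (n : nat) (R : nzRingType) (S : comNzRingType).
Variables (f : {rmorphism R -> S}) (gamma : 'I_n -> {poly S}).

Lemma deriv_mmap_curve (p : {mpoly R[n]}) :
  (mmap (polyC \o f) gamma p)^`() =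
  \sum_(j < n) mmap (polyC \o f) gamma (p^`M(j)) * (gamma j)^`().
Proof.
elim/mpoly_ring_ind: p => [c|i|p q IHp IHq|p q IHp IHq].
- by rewrite mmapC derivC big1 // => j _; rewrite mderivC mmap0 mul0r.
- rewrite mmapX mmap1U (bigD1 i) //= mderivXU eqxx mmapC [_ 1]/= rmorph1 mul1r.
  by rewrite big1 ?addr0 // => j /negbTE ji; rewrite mderivXU eq_sym ji mmapC raddf0 mul0r.
- rewrite !mmapD derivD IHp IHq -big_split /=.
  by apply: eq_bigr => j _; rewrite mderivD mmapD mulrDl.
rewrite rmorphM derivM IHp IHq mulr_suml mulr_sumr -big_split /=.
apply: eq_bigr => j _; rewrite mderivM mmapD !rmorphM mulrDl.
by congr (_ + _); rewrite -!mulrA; congr (_ * _); rewrite mulrC.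
Qed.

End CurveChainRule.

Section PolyCharZero.
Variable S : idomainType.
Hypothesis S_pchar0 : [pchar S] =i pred0.

Lemma poly_linear_ode_eq0 (I : finType) (E : I -> {poly S}) (A : I -> I -> {poly S}) :
  (forall j, (E j).[0] = 0) -> (forall j, (E j)^`() = \sum_l A j l * E l) ->
  forall j, E j = 0.
Proof.
move=> E0 dE j; apply/polyP => k; rewrite coef0; elim/ltn_ind: k j => -[|k] IH j.
  by rewrite -horner_coef0.
have : (E j)^`()`_k = 0.
  rewrite dE coef_sum big1 // => l _; rewrite coefM big1 // => m _.
  by rewrite IH ?mulr0 // ltnS leq_subr.
by rewrite coef_deriv -mulr_natr => /eqP; rewrite mulf_eq0 ((pcharf0P S).1 S_pchar0) orbF => /eqP.
Qed.

Lemma poly_eq0_nat_roots (p : {poly S}) : (forall m : nat, root p m%:R) -> p = 0.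
Proof.
move=> rootp; apply/eqP; apply: contraT => p_neq0.
have natr_inj : injective (fun m : nat => m%:R : S).
  move=> a b /eqP; rewrite -subr_eq0; have nat0 := (pcharf0P S).1 S_pchar0.
  case: (leqP b a) => [le_ba|/ltnW le_ab].
    by rewrite -natrB // nat0 subn_eq0 => le_ab; apply/eqP; rewrite eqn_leq le_ab.
  by rewrite -opprB oppr_eq0 -natrB // nat0 subn_eq0 => le_ba; apply/eqP; rewrite eqn_leq le_ab.
have := @max_poly_roots _ p [seq m%:R | m <- iota 0 (size p)] p_neq0.
rewrite size_map size_iota ltnn; apply; first by apply/allP => x /mapP [m _ ->].
by rewrite map_inj_uniq ?iota_uniq.
Qed.

End PolyCharZero.

Lemma pchar_mpolyCC (n : nat) : [pchar {mpoly CC[n]}] =i pred0.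
Proof. by move=> p; rewrite pchar_lalg pchar_num. Qed.

Section ShiftAlongH.
Variables (n : nat) (H : 'I_n -> {mpoly CC[n]}).
Local Notation MP := {mpoly CC[n]}.

Definition shift_map (c : CC) : n.-tuple MP := [tuple 'X_j + c *: H j | j < n].

Definition shift_line (j : 'I_n) : {poly MP} := ('X_j)%:P + 'X * (H j)%:P.

(* [shift_poly p] is p(X + t H), a polynomial in t over {mpoly CC[n]}. *)
Local Notation shift_poly := (mmap (polyC \o @mpolyC n CC) shift_line).

Lemma horner_shift_poly (c : CC) (p : MP) : (shift_poly p).[c%:MP] = p \mPo shift_map c.
Proof.
apply: (mpoly_rmorph_eq (f := horner_eval c%:MP \o shift_poly)) => [d|i] /=.
  by rewrite mmapC comp_mpolyC /horner_eval /= hornerC.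
rewrite /horner_eval mmapX mmap1U comp_mpolyXU -tnth_nth tnth_mktuple /shift_line.
by rewrite hornerD hornerC hornerM hornerX hornerC mul_mpolyC.
Qed.

Lemma shift_map0 : shift_map 0 = [tuple 'X_i | i < n].
Proof. by apply: eq_from_tnth => i; rewrite !tnth_mktuple scale0r addr0. Qed.

Lemma shift_map1 : shift_map 1 = idplus H.
Proof. by apply: eq_from_tnth => i; rewrite !tnth_mktuple scale1r. Qed.

Lemma shift_mapN1 : shift_map (-1) = idminus H.
Proof. by apply: eq_from_tnth => i; rewrite !tnth_mktuple scaleN1r. Qed.

Lemma horner0_shift_poly (p : MP) : (shift_poly p).[0] = p.
Proof. by rewrite -mpolyC0 horner_shift_poly shift_map0 comp_mpoly_id. Qed.

Lemma deriv_shift_poly (p : MP) :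
  (shift_poly p)^`() = \sum_(j < n) shift_poly (p^`M(j)) * (H j)%:P.
Proof.
rewrite deriv_mmap_curve; apply: eq_bigr => j _; congr (_ * _).
by rewrite /shift_line derivD derivC add0r derivM derivX derivC mulr0 addr0 mul1r.
Qed.

Lemma JH_H_eq0_shift_invariant :
  (forall i, JH_H H i = 0) -> forall c i, H i \mPo shift_map c = H i.
Proof.
move=> JH0 c i; rewrite -horner_shift_poly.
pose E j := shift_poly (H j) - (H j)%:P.
suff /(_ i)/eqP : forall j, E j = 0 by rewrite subr_eq0 => /eqP ->; rewrite hornerC.
apply: (poly_linear_ode_eq0 (pchar_mpolyCC n) (A := fun j l => - shift_poly ((H j)^`M(l)))).
  by move=> j; rewrite hornerD hornerN hornerC horner0_shift_poly subrr.
move=> j; have shift_JH0 : \sum_l shift_poly ((H j)^`M(l)) * shift_poly (H l) = 0.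
  transitivity (shift_poly (JH_H H j)); last by rewrite JH0 rmorph0.
  by rewrite /JH_H rmorph_sum; apply: eq_bigr => l _; rewrite rmorphM.
rewrite /E derivB derivC subr0 deriv_shift_poly.
under [RHS]eq_bigr => l _ do rewrite mulNr mulrBr opprB.
by rewrite sumrB shift_JH0 subr0.
Qed.

Lemma shift_invariant_nat :
  (forall i, H i \mPo idplus H = H i) -> forall (m : nat) i, H i \mPo shift_map m%:R = H i.
Proof.
move=> inv1; elim=> [|m IHm] i; first by rewrite shift_map0 comp_mpoly_id.
suff -> : shift_map m.+1%:R = [tuple tnth (shift_map m%:R) j \mPo idplus H | j < n].
  by rewrite -comp_mpolyA IHm inv1.
apply: eq_from_tnth => j; rewrite !tnth_mktuple comp_mpolyD comp_mpolyZ inv1.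
rewrite comp_mpolyXU -tnth_nth tnth_mktuple.
by rewrite mulrS scalerDl scale1r addrA.
Qed.

Lemma shift_invariant_JH_H_eq0 :
  (forall i, H i \mPo idplus H = H i) -> forall i, JH_H H i = 0.
Proof.
move=> inv1 i; have shiftH : shift_poly (H i) = (H i)%:P.
  apply/eqP; rewrite -subr_eq0; apply/eqP; apply: (poly_eq0_nat_roots (pchar_mpolyCC n)) => m.
  rewrite /root -mpolyC_nat hornerD hornerN hornerC horner_shift_poly.
  by rewrite shift_invariant_nat ?subrr.
have := congr1 (fun q => q^`().[0]) shiftH; rewrite /= derivC horner0.
rewrite deriv_shift_poly horner_sum => <-; apply: eq_bigr => j _.
by rewrite hornerM hornerC horner0_shift_poly.
Qed.

End ShiftAlongH.

Section QuasiTranslation.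
Variables (n : nat) (H : 'I_n -> {mpoly CC[n]}).

Lemma pmap_comp_idP (G F : n.-tuple {mpoly CC[n]}) :
  pmap_comp G F = pmap_id n <-> forall i, tnth G i \mPo F = 'X_i.
Proof.
split=> [GF i | GF]; last by apply: eq_from_tnth => i; rewrite !tnth_mktuple.
by have := congr1 (fun t => tnth t i) GF; rewrite !tnth_mktuple.
Qed.

Lemma comp_idplus (F : n.-tuple {mpoly CC[n]}) (i : 'I_n) :
  tnth (idplus H) i \mPo F = tnth F i + (H i \mPo F).
Proof. by rewrite tnth_mktuple comp_mpolyD comp_mpolyXU -tnth_nth. Qed.

Lemma comp_idminus (F : n.-tuple {mpoly CC[n]}) (i : 'I_n) :
  tnth (idminus H) i \mPo F = tnth F i - (H i \mPo F).
Proof. by rewrite tnth_mktuple comp_mpolyB comp_mpolyXU -tnth_nth. Qed.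

Lemma quasi_translationP :
  quasi_translation H <->
  (forall i, H i \mPo idplus H = H i) /\ (forall i, H i \mPo idminus H = H i).
Proof.
have id_plus_minus i :
    tnth (idplus H) i \mPo idminus H = 'X_i <-> H i \mPo idminus H = H i.
  rewrite comp_idplus tnth_mktuple; split=> [|->]; last by rewrite subrK.
  move=> /(congr1 (fun x => - 'X_i + x)); rewrite -addrA addKr addNr.
  by move=> /eqP; rewrite addrC subr_eq0 => /eqP.
have id_minus_plus i :
    tnth (idminus H) i \mPo idplus H = 'X_i <-> H i \mPo idplus H = H i.
  rewrite comp_idminus tnth_mktuple; split=> [|->]; last by rewrite addrK.
  move=> /(congr1 (fun x => - 'X_i + x)); rewrite -addrA addKr addNr.
  by move=> /eqP; rewrite subr_eq0 => /eqP.
split=> [[/pmap_comp_idP inv_pm /pmap_comp_idP inv_mp] | [inv_p inv_m]].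
  by split=> i; [apply/id_minus_plus | apply/id_plus_minus].
by split; apply/pmap_comp_idP => i; [apply/id_plus_minus | apply/id_minus_plus].
Qed.

Lemma Pk2E (i : 'I_n) : Pk H i 2 = (H i \mPo idplus H) - H i.
Proof.
have PkS k : Pk H i k.+1 = (Pk H i k \mPo idplus H) - Pk H i k by [].
have Pk1 : Pk H i 1 = H i.
  by rewrite PkS comp_mpolyXU -tnth_nth tnth_mktuple addrAC subrr add0r.
by rewrite PkS Pk1.
Qed.

End QuasiTranslation.

Theorem proposition2p7 (n : nat) (H : 'I_n -> {mpoly CC[n]})
    (hH : forall i, H i != 0 /\ (2 <= lowdeg (H i))%nat) :
  (quasi_translation H <-> (forall i, JH_H H i = 0)) /\
  ((forall i, JH_H H i = 0) <-> (forall i, Pk H i 2 = 0)).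
Proof.
have P2_iff i : Pk H i 2 = 0 <-> H i \mPo idplus H = H i.
  by rewrite Pk2E; split=> [/eqP|->]; rewrite ?subrr // subr_eq0 => /eqP.
split; split.
- by case/quasi_translationP => inv_plus _; exact: shift_invariant_JH_H_eq0 inv_plus.
- move=> JH0; apply/quasi_translationP; rewrite -shift_map1 -shift_mapN1.
  by split; apply: JH_H_eq0_shift_invariant.
- by move=> JH0 i; apply/P2_iff; rewrite -shift_map1; apply: JH_H_eq0_shift_invariant.
by move=> P2; apply: shift_invariant_JH_H_eq0 => i; apply/P2_iff.
Qed.
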